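(* Let $(X,T)$ be a dynamical system with $\mathcal M_T(X)\neq\emptyset$. If $\mathcal M_T^e(X)$ is dense in $\mathcal M_T(X)$, then $T|_{C_M(T)}\colon C_M(T)\to C_M(T)$ is topologically transitive.
   Context: A dynamical system $(X,T)$ consists of a complete separable metric space $(X,\rho)$ and a continuous surjection $T\colon X\to X$. $\mathcal M_T(X)$ is the set of $T$-invariant Borel probability measures (weak$*$ topology), $\mathcal M_T^e(X)$ the ergodic ones. The measure center $C_M(T)$ is the complement of the union of all open sets $U$ with $\mu(U)=0$ for every $\mu\in\mathcal M_T(X)$; it is closed and $T$-invariant. A map $S\colon Y\to Y$ is topologically transitive if for every two nonempty open $U,V\subset Y$ there is $n>0$ with $U\cap S^{-n}V\ne\emptyset$. *)

From HB Require Import structures.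
From mathcomp Require Import all_boot all_order all_algebra.
From mathcomp Require Import all_classical all_reals all_analysis.
Set Implicit Arguments. Unset Strict Implicit. Unset Printing Implicit Defensive.
Import Order.TTheory GRing.Theory Num.Theory.
Import numFieldNormedType.Exports.
Local Open Scope classical_set_scope.
Local Open Scope ring_scope.

Definition borel (R : realType) (X : pseudoPMetricType R) :
  measurableType (sigma_display (@open X)) :=
  g_sigma_algebraType (@open X).

Definition prob (R : realType) (X : pseudoPMetricType R) :=
  probability (borel X) R.

Definition T_invariant (R : realType) (X : pseudoPMetricType R) (T : X -> X)
  (mu : prob X) : Prop :=
  forall A : set (borel X), measurable A -> mu (T @^-1` A) = mu A.

Definition T_ergodic (R : realType) (X : pseudoPMetricType R) (T : X -> X)
  (mu : prob X) : Prop :=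
  T_invariant T mu /\
  forall A : set (borel X), measurable A -> T @^-1` A = A ->
    mu A = 0%E \/ mu A = 1%E.

Definition bcont (R : realType) (X : pseudoPMetricType R) (f : X -> R) : Prop :=
  continuous f /\ exists M : R, forall x, `|f x| <= M.

Definition pint (R : realType) (X : pseudoPMetricType R) (mu : prob X)
  (f : X -> R) : R :=
  fine (\int[mu]_(x in setT) (f x)%:E)%E.

(* E is weak*-dense in M (as subsets of the Borel probability measures on X):
   every basic weak* neighbourhood
     { nu | |int f_i dnu - int f_i dmu| < eps, i < n }
   (f_i bounded continuous, eps > 0) of every mu in M meets E. *)
Definition weak_star_dense_in (R : realType) (X : pseudoPMetricType R)
  (E M : set (prob X)) : Prop :=
  forall mu, M mu ->
  forall (n : nat) (f : 'I_n -> X -> R), (forall i, bcont (f i)) ->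
  forall eps : R, 0 < eps ->
  exists nu, E nu /\ forall i, `|pint nu (f i) - pint mu (f i)| < eps.

Definition measure_center (R : realType) (X : pseudoPMetricType R)
  (T : X -> X) : set X :=
  ~` \bigcup_(U in [set U : set X | open U /\
         forall mu : prob X, T_invariant T mu -> mu U = 0%E]) U.

(* Topological transitivity of the restriction T|_C : C -> C, with C carrying
   the subspace topology (relatively open sets are C `&` U with U open in X):
   for all nonempty relatively open C`&`U, C`&`V there is n > 0 with
   (C`&`U) `&` (T|_C)^{-n}(C`&`V) nonempty. *)
Definition transitive_on (R : realType) (X : pseudoPMetricType R)
  (C : set X) (T : X -> X) : Prop :=
  forall U V : set X, open U -> open V ->
    (C `&` U) !=set0 -> (C `&` V) !=set0 ->
    exists n : nat, (0 < n)%N /\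
      exists x, (C `&` U) x /\ (C `&` V) (iter n T x).

Definition separable_space (R : realType) (X : pseudoPMetricType R) : Prop :=
  exists D : set X, countable D /\ dense D.

From HB Require Import structures.
From mathcomp Require Import all_boot all_order all_algebra.
From mathcomp Require Import all_classical all_reals all_analysis.
From mathcomp Require Import measurable_realfun.
Import Order.TTheory GRing.Theory Num.Theory.
Local Open Scope classical_set_scope.
Local Open Scope ring_scope.
Set Implicit Arguments. Unset Strict Implicit. Unset Printing Implicit Defensive.
Import numFieldNormedType.Exports.

(* Let U and V be open sets meeting C_M(T).  Invariant measures mu1 and mu2 charge U
   and V respectively, so their average charges both.  In a separable space an open set
   of positive measure carries a continuous bump function with positive integral, hence
   weak* density provides an ergodic rho charging both U and V.  Ergodicity yields n >= 1
   with rho (U `&` T^-n V) > 0, and an open set charged by an invariant measure meets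
   C_M(T), which is forward T-invariant. *)

Section borel.
Context (R : realType) (X : pseudoPMetricType R).

Lemma open_measurable_borel (U : set X) : open U -> measurable (U : set (borel X)).
Proof. exact: sub_sigma_algebra. Qed.

Lemma continuous_measurable_borel (f : X -> R) : continuous f ->
  measurable_fun [set: borel X] (f : borel X -> R).
Proof.
move=> /continuousP cf; apply: (measurability _ (RGenOpens.measurableE R)).
move=> _ [_ [a [b ->] <-]]; rewrite setTI; apply: open_measurable_borel.
exact/cf/interval_open.
Qed.

End borel.

Section separable.
Context (R : realType) (X : pseudoPMetricType R) (sepX : separable_space X).

(* Lindelof: cover by the balls of radius 1/(k+1) centred in a countable dense set that lie
   inside some member of F, and pick one such member for each ball. *)
Lemma separable_bigcup_open_countable (F : set (set X)) :
  (forall W, F W -> open W) ->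
  exists A : (set X)^nat, (forall n, F (A n) \/ A n = set0) /\
    \bigcup_(W in F) W `<=` \bigcup_n A n.
Proof.
move=> oF; have [D [/countable_injP[f finj] dD]] := sepX.
pose e n : X := get [set d | D d /\ f d = n].
have eD d : D d -> e (f d) = d.
  move=> Dd; have [De fe] : D (e (f d)) /\ f (e (f d)) = f d.
    by apply: (@getPex _ [set d0 | D d0 /\ f d0 = f d]); exists d.
  by apply: finj; rewrite ?in_setE.
pose inside (p : nat * nat) := exists W, F W /\ ball (e p.1) p.2.+1%:R^-1 `<=` W.
pose S p : set X := if pselect (inside p) is left h then projT1 (cid h) else set0.
exists (fun n => if unpickle n is Some p then S p else set0); split.
  move=> n; case: (unpickle n) => [p|]; last by right.
  by rewrite /S; case: pselect => [h|_]; [left; case: (projT2 (cid h))|right].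
move=> x [W FW Wx].
have [r hr] := nbhs_ex (open_nbhs_nbhs (conj (oF W FW) Wx) : nbhs x W).
have [k hk] : exists k : nat, k.+1%:R^-1 < r%:num / 2.
  by have [k] := ltr_add_invr (gt0 (r%:num / 2)%:pos); rewrite add0r; exists k.
have [z [/interior_subset xz Dz]] : interior (ball x k.+1%:R^-1) `&` D !=set0.
  by apply: dD; [exists x; exact: nbhsx_ballx | exact: open_interior].
have zin : inside (f z, k).
  exists W; split => // y; rewrite eD // => zy; apply: hr.
  apply: le_ball (ball_triangle xz zy).
  by rewrite [leRHS](splitr r%:num) lerD // ltW.
exists (pickle (f z, k)) => //; rewrite pickleK /S /=.
case: pselect => [h|//]; case: (projT2 (cid h)) => _; apply.
by rewrite eD //; exact: ball_sym.
Qed.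

Lemma separable_subset_bigcup_open_null (mu : {measure set (borel X) -> \bar R})
    (F : set (set X)) (U : set X) :
  measurable (U : set (borel X)) -> (forall W, F W -> open W /\ mu W = 0%E) ->
  U `<=` \bigcup_(W in F) W -> mu U = 0%E.
Proof.
move=> mU hF UF.
have [A [AF FA]] := separable_bigcup_open_countable (fun W FW => (hF W FW).1).
have mA n : measurable (A n : set (borel X)).
  by case: (AF n) => [/hF[/open_measurable_borel]|->].
apply/eqP; rewrite eq_le measure_ge0 andbT.
apply: le_trans (measure_sigma_subadditive _ mA mU (subset_trans UF FA)) _.
by rewrite eseries0 // => n _ _; case: (AF n) => [/hF[]|->] //; rewrite measure0.
Qed.

End separable.

Section bump.
Context (R : realType) (X : pseudoPMetricType R).

Definition bump_in (U : set X) (g : X -> R) : Prop :=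
  [/\ continuous g, forall x, 0 <= g x <= 1 & forall x, ~ U x -> g x = 0].

Lemma bump_in_bcont (U : set X) g : bump_in U g -> bcont g.
Proof.
case=> gc g01 _; split => //; exists 1 => x.
by case/andP: (g01 x) => g0 g1; rewrite ger0_norm.
Qed.

Lemma open_bump_in (U : set X) x :
  open U -> U x -> exists g, bump_in U g /\ g x = 1.
Proof.
move=> oU Ux; have sep : uniform_separator [set x] (~` U).
  by apply: point_uniform_separator => //; exact: open_closedC.
pose u := @Urysohn X R [set x] (~` U).
have u01 y : 0 <= u y <= 1.
  have : `[0, 1]%classic (u y) by apply: Urysohn_range; exists y.
  by rewrite /= in_itv.
exists (fun y => 1 - u y); split; last first.
  suff -> : u x = 0 by rewrite subr0.
  by apply: (Urysohn_sub0 sep); exists x.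
split=> [y | y | y nUy].
- by apply: cvgB; [exact: cvg_cst | exact: Urysohn_continuous].
- by case/andP: (u01 y) => u0 u1; rewrite subr_ge0 u1 lerBlDr lerDl u0.
- suff -> : u y = 1 by rewrite subrr.
  by apply: (Urysohn_sub1 sep); exists y.
Qed.

Variables (mu : prob X) (U : set X) (g : X -> R).
Hypotheses (oU : open U) (gU : bump_in U g).

Let g_measurable : measurable_fun [set: borel X] (fun x => (g x)%:E).
Proof.
by case: gU => gc _ _; apply/measurable_EFinP; exact: continuous_measurable_borel.
Qed.

Let g_ge0 x : (0 <= (g x)%:E)%E.
Proof. by case: gU => _ /(_ x)/andP[]. Qed.

Lemma integral_bump_le_measure : (\int[mu]_(x in setT) (g x)%:E <= mu U)%E.
Proof.
have mU := open_measurable_borel oU.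
rewrite -(setIT U) -integral_indic //.
apply: ge0_le_integral => //; first by apply/measurable_EFinP; exact: measurable_indic.
move=> x _; rewrite lee_fin indicE; case: gU => _ g01 gout.
case: (boolP (x \in U)) => [_ | /negP]; first by case/andP: (g01 x).
by rewrite in_setE => /gout ->.
Qed.

Lemma measure_gt0_pint_bump : 0 < pint mu g -> (0 < mu U)%E.
Proof.
move=> pg; rewrite lt_neqAle measure_ge0 andbT; apply/eqP => U0.
move: pg; rewrite /pint; suff -> : (\int[mu]_(x in setT) (g x)%:E = 0)%E by rewrite ltxx.
apply/le_anti; rewrite integral_ge0 // andbT U0; exact: integral_bump_le_measure.
Qed.

Lemma pint_bump_gt0 (W : set X) (c : R) : open W -> 0 < c ->
  (forall x, W x -> c <= g x) -> (0 < mu W)%E -> 0 < pint mu g.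
Proof.
move=> oW c0 cg W0; have mW := open_measurable_borel oW.
apply: fine_gt0; apply/andP; split; last first.
  apply: le_lt_trans integral_bump_le_measure _.
  by apply: le_lt_trans (probability_le1 mu (open_measurable_borel oU)) _; rewrite ltey.
have cW : (\int[mu]_(x in setT) (c * \1_W x)%:E = c%:E * mu W)%E.
  rewrite (@integralZl_indic _ _ _ mu setT measurableT (fun=> W)) ?integral_indic ?setIT //.
  by move=> /ltW; rewrite leNgt c0.
have cW0 : (0 < c%:E * mu W)%E by rewrite mule_gt0 ?lte_fin.
apply: lt_le_trans cW0 _; rewrite -cW; apply: ge0_le_integral => //.
- by move=> x _; rewrite lee_fin indicE mulr_ge0 ?ler0n ?ltW.
- apply/measurable_EFinP; apply: measurable_funM; first exact: measurable_cst.
  exact: measurable_indic.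
- move=> x _; rewrite lee_fin indicE; case: (boolP (x \in W)) => [/set_mem/cg | _].
    by rewrite mulr1.
  by rewrite mulr0 -lee_fin.
Qed.

End bump.

Lemma separable_exists_bump_pint_gt0 (R : realType) (X : pseudoPMetricType R)
    (mu : prob X) (U : set X) :
  separable_space X -> open U -> (0 < mu U)%E ->
  exists g, bump_in U g /\ 0 < pint mu g.
Proof.
move=> sepX oU; apply: contraPP => nobump; apply/negP; rewrite -leNgt measure_le0.
apply/eqP; apply: (separable_subset_bigcup_open_null sepX
  (F := [set W | open W /\ mu W = 0%E]) (open_measurable_borel oU)) => // x Ux.
have [g [gU gx]] := open_bump_in oU Ux; have [gc _ _] := gU.
pose W := g @^-1` `]2^-1, +oo[.
have oW : open W by move/continuousP: gc; apply; exact: rray_open.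
exists W; last by rewrite /W /= in_itv /= andbT gx invf_lt1 ?ltr1n.
split => //; apply/eqP; rewrite eq_le measure_ge0 andbT leNgt; apply/negP => W0.
apply: nobump; exists g; split => //.
apply: (pint_bump_gt0 (c := 2^-1) oU gU oW _ _ W0) => // y.
by rewrite /W /= in_itv /= andbT => /ltW.
Qed.

Section mixture.
Context d (T : measurableType d) (R : realType) (mu nu : probability T R).

Definition mixture := mscale (2^-1)%:nng (measure_add mu nu).
HB.instance Definition _ := Measure.on mixture.

Local Open Scope ereal_scope.

Lemma mixtureE A : mixture A = (2^-1)%:E * (mu A + nu A).
Proof. by rewrite /mixture /mscale /=; congr (_ * _); exact: measure_addE. Qed.

Let mixture_setT : mixture setT = 1.
Proof. by rewrite mixtureE !probability_setT -EFinD -EFinM mulVf. Qed.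

HB.instance Definition _ := Measure_isProbability.Build _ _ _ mixture mixture_setT.

Definition mixture_prob : probability T R := mixture.

Lemma mixture_gt0l A : 0 < mu A -> 0 < mixture_prob A.
Proof.
move=> muA; rewrite /= mixtureE mule_gt0 ?lte_fin ?invr_gt0 ?ltr0n //.
exact: lt_le_trans muA (leeDl _ (measure_ge0 _ _)).
Qed.

Lemma mixture_gt0r A : 0 < nu A -> 0 < mixture_prob A.
Proof.
move=> nuA; rewrite /= mixtureE mule_gt0 ?lte_fin ?invr_gt0 ?ltr0n //.
exact: lt_le_trans nuA (leeDr _ (measure_ge0 _ _)).
Qed.

End mixture.

Lemma mixture_invariant (R : realType) (X : pseudoPMetricType R) (T : X -> X)
    (mu nu : prob X) :
  T_invariant T mu -> T_invariant T nu -> T_invariant T (mixture_prob mu nu).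
Proof. by move=> muT nuT A mA; rewrite /= !mixtureE muT // nuT. Qed.

Lemma bigcap_iter_preimage_invariant (Y : Type) (T : Y -> Y) (P : set Y) :
  T @^-1` P `<=` P ->
  T @^-1` (\bigcap_k (iter k T @^-1` P)) = \bigcap_k (iter k T @^-1` P).
Proof.
move=> TP; apply/seteqP; split=> x /= Bx k _.
  case: k => [|k]; first exact/TP/(Bx 0%N I).
  by change (P (iter k.+1 T x)); rewrite iterSr; exact: (Bx k I).
by change (P (iter k T (T x))); rewrite -iterSr; exact: (Bx k.+1 I).
Qed.

Lemma measure_bigcap_nonincreasing_const d (T : measurableType d) (R : realType)
    (mu : {measure set T -> \bar R}) (F : (set T)^nat) :
  (mu (F 0%N) < +oo)%E -> (forall k, measurable (F k)) -> nonincreasing_seq F ->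
  (forall k, mu (F k) = mu (F 0%N)) -> mu (\bigcap_k F k) = mu (F 0%N).
Proof.
move=> F0 mF Fdecr Fconst.
have := nonincreasing_cvg_mu F0 mF (bigcapT_measurable mF) Fdecr.
have -> : mu \o F = cst (mu (F 0%N)) by apply/funext => k /=.
by move/(cvg_lim (@ereal_hausdorff R)); rewrite lim_cst.
Qed.

Lemma probability_setI_full d (T : measurableType d) (R : realType)
    (P : probability T R) (A B : set T) :
  measurable A -> measurable B -> P B = 1%E -> P (A `&` B) = P A.
Proof.
move=> mA mB PB; rewrite [RHS](measureDI P mA mB).
rewrite (@subset_measure0 _ _ _ P (A `\` B) (~` B)) ?add0e //.
- exact: measurableD.
- exact: measurableC.
- by apply: etrans (probability_setC P mB) _; rewrite PB subee.
Qed.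

Lemma weak_star_dense_pint_gt0 (R : realType) (X : pseudoPMetricType R)
    (E M : set (prob X)) (mu : prob X) (f g : X -> R) :
  weak_star_dense_in E M -> M mu -> bcont f -> bcont g ->
  0 < pint mu f -> 0 < pint mu g ->
  exists nu, E nu /\ 0 < pint nu f /\ 0 < pint nu g.
Proof.
move=> EM Mmu bf bg pf pg.
pose h (i : 'I_2) := if i == ord0 then f else g.
have bh i : bcont (h i) by rewrite /h; case: ifP.
have eps0 : 0 < Num.min (pint mu f) (pint mu g) by rewrite lt_min pf pg.
have [nu [Enu close]] := EM mu Mmu 2 h bh _ eps0.
have pos i : 0 < pint nu (h i).
  have := close i; rewrite ltr_distl => /andP[+ _]; apply: le_lt_trans.
  by rewrite subr_ge0 /h; case: ifP => _; rewrite ge_min lexx ?orbT.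
by exists nu; split; last split; [| exact: (pos ord0) | exact: (pos ord_max)].
Qed.

Section dynamics.
Context (R : realType) (X : pseudoPMetricType R) (T : X -> X).

Lemma measure_center_meets_gt0 (U : set X) :
  open U -> (measure_center T `&` U) !=set0 ->
  exists mu : prob X, T_invariant T mu /\ (0 < mu U)%E.
Proof.
move=> oU [x [Cx Ux]]; apply: contrapT => nomu; apply: Cx.
exists U => //; split => // mu muT.
apply/eqP; rewrite eq_le measure_ge0 andbT leNgt; apply/negP => muU.
by apply: nomu; exists mu.
Qed.

Lemma invariant_gt0_meets_center (mu : prob X) (O : set X) :
  separable_space X -> T_invariant T mu -> open O -> (0 < mu O)%E ->
  (measure_center T `&` O) !=set0.
Proof.
move=> sepX muT oO; apply: contraPP => nomeet.
apply/negP; rewrite -leNgt measure_le0; apply/eqP.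
apply: (separable_subset_bigcup_open_null sepX (open_measurable_borel oO)
  (F := [set U | open U /\ forall nu : prob X, T_invariant T nu -> nu U = 0%E])).
  by move=> W [oW /(_ mu muT)].
by move=> x Ox; apply: contrapT => Cx; apply: nomeet; exists x.
Qed.

Hypothesis Tc : continuous T.

Lemma continuous_iter n : continuous (iter n T).
Proof.
elim: n => [|n IH] /=; first by move=> x.
by move=> x; apply: continuous_comp; [exact: IH | exact: Tc].
Qed.

Lemma open_preimage_iter n (W : set X) : open W -> open (iter n T @^-1` W).
Proof. by move/continuousP: (continuous_iter (n := n)); apply. Qed.

Lemma measure_center_iter n x :
  measure_center T x -> measure_center T (iter n T x).
Proof.
elim: n => [//|n IH] /IH Cx [W [oW Wnull] WTx]; apply: Cx.
exists (T @^-1` W) => //; split; first exact: (open_preimage_iter 1).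
by move=> mu muT; rewrite muT ?Wnull //; exact: open_measurable_borel.
Qed.

Lemma invariant_preimage_iter (mu : prob X) n (W : set X) :
  T_invariant T mu -> open W -> mu (iter n T @^-1` W) = mu W.
Proof.
move=> muT oW; elim: n => [//|n IH].
rewrite -IH -[RHS]muT; last by apply: open_measurable_borel; exact: open_preimage_iter.
congr (mu _); apply/funext => x.
by change (W (iter n.+1 T x) = W (iter n T (T x))); rewrite iterSr.
Qed.

End dynamics.

Section ergodic.
Context (R : realType) (X : pseudoPMetricType R) (T : X -> X).
Hypothesis Tc : continuous T.
Variable rho : prob X.
Hypothesis rhoE : T_ergodic T rho.

Lemma ergodic_bigcap_iter_preimage_full (P : set X) :
  open P -> T @^-1` P `<=` P -> (0 < rho P)%E ->
  rho (\bigcap_k (iter k T @^-1` P)) = 1%E.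
Proof.
move=> oP TP P0; have [rhoT rho01] := rhoE.
have mQ k : measurable (iter k T @^-1` P : set (borel X)).
  by apply: open_measurable_borel; exact: open_preimage_iter.
have BP : rho (\bigcap_k (iter k T @^-1` P)) = rho P.
  apply: measure_bigcap_nonincreasing_const => //.
  - by rewrite (le_lt_trans (probability_le1 _ (mQ 0%N))) ?ltey.
  - by apply/nonincreasing_seqP => k; apply/subsetPset => x /TP.
  - by move=> k; exact: invariant_preimage_iter.
have [B0|//] := rho01 _ (bigcapT_measurable mQ) (bigcap_iter_preimage_invariant TP).
by move: P0; rewrite -BP B0 ltxx.
Qed.

Lemma ergodic_meet_preimage_iter (U V : set X) :
  open U -> open V -> (0 < rho U)%E -> (0 < rho V)%E ->
  exists n, (0 < rho (U `&` iter n.+1 T @^-1` V))%E.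
Proof.
move=> oU oV U0 V0.
pose P := \bigcup_n (iter n.+1 T @^-1` V).
have oP : open P by apply: bigcup_open => n _; exact: open_preimage_iter.
have TP : T @^-1` P `<=` P.
  move=> x [n _ Vx]; exists n.+1 => //.
  by change (V (iter n.+2 T x)); rewrite iterSr.
have P0 : (0 < rho P)%E.
  apply: lt_le_trans V0 _; rewrite -(invariant_preimage_iter Tc 1 rhoE.1 oV).
  apply: le_measure; rewrite ?inE; last by move=> x Vx; exists 0%N.
    by apply: open_measurable_borel; exact: open_preimage_iter.
  exact: open_measurable_borel.
(* P is only sub-invariant; T_ergodic speaks about strictly invariant sets such as B. *)
pose B := \bigcap_k (iter k T @^-1` P).
have mB : measurable (B : set (borel X)).
  apply: bigcapT_measurable => k.
  by apply: open_measurable_borel; exact: open_preimage_iter.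
have mU := open_measurable_borel oU.
have UB0 : (0 < rho (U `&` B))%E.
  by rewrite probability_setI_full // ergodic_bigcap_iter_preimage_full.
apply: contrapT => novisit; move: UB0; apply/negP; rewrite -leNgt.
have mUV n : measurable (U `&` iter n.+1 T @^-1` V : set (borel X)).
  by apply: open_measurable_borel; apply: openI => //; exact: open_preimage_iter.
have cover : U `&` B `<=` \bigcup_n (U `&` iter n.+1 T @^-1` V).
  by move=> x [Ux /(_ 0%N I) [n _ Vx]]; exists n.
apply: le_trans (measure_sigma_subadditive rho mUV (measurableI _ _ mU mB) cover) _.
rewrite eseries0 // => n _ _; apply/eqP; rewrite -measure_le0 leNgt.
by apply/negP => pos; apply: novisit; exists n.
Qed.

End ergodic.

Theorem proposition7p2 (R : realType) (X : completePseudoMetricType R)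
  (T : X -> X)
  (hX : hausdorff_space X) (sepX : separable_space X)
  (Tcont : continuous T) (Tsurj : forall y : X, exists x, T x = y)
  (hM : exists mu : prob X, T_invariant T mu)
  (hdense : weak_star_dense_in (T_ergodic T) (T_invariant T)) :
  transitive_on (measure_center T) T.
Proof.
move=> U V oU oV CU CV.
have [mu1 [mu1T U1]] := measure_center_meets_gt0 oU CU.
have [mu2 [mu2T V2]] := measure_center_meets_gt0 oV CV.
have [gU [gUU pU]] := separable_exists_bump_pint_gt0 sepX oU (mixture_gt0l mu2 U1).
have [gV [gVV pV]] := separable_exists_bump_pint_gt0 sepX oV (mixture_gt0r mu1 V2).
have [rho [rhoE [rhoU rhoV]]] := weak_star_dense_pint_gt0 hdense
  (mixture_invariant mu1T mu2T) (bump_in_bcont gUU) (bump_in_bcont gVV) pU pV.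
have [n UV] := ergodic_meet_preimage_iter Tcont rhoE oU oV
  (measure_gt0_pint_bump oU gUU rhoU) (measure_gt0_pint_bump oV gVV rhoV).
have oUV := openI oU (open_preimage_iter Tcont n.+1 oV).
have [x [Cx [Ux Vx]]] := invariant_gt0_meets_center sepX rhoE.1 oUV UV.
exists n.+1; split => //; exists x; do 2!split => //.
exact: measure_center_iter.
Qed.
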